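(* Let $q$ be a prime power, $h\geq 2$, let $f:\mathbb{F}_{q^h}\to\mathbb{F}_q$ be a nonzero $\mathbb{F}_q$-linear functional, $\alpha\in\mathbb{F}_{q^h}\setminus\mathbb{F}_q$ and $\beta\in\mathbb{F}_{q^h}\setminus\{0\}$. Let $\mathcal{L}=\{(x:f(x)+y\alpha:y\beta): x\in\mathbb{F}_{q^h},\ y\in\mathbb{F}_q,\ (x,y)\neq(0,0)\}$ and let $\varphi$ be the collineation of $\mathrm{PG}(2,q^h)$ given by $(x:y:z)\mapsto(z:x:y)$. Suppose that (1) $f(\alpha/\beta)\neq 1$, and (2) for all $k\in\mathbb{F}_q$, $k\neq f\left(\frac{\alpha^2}{\beta}\right)+\left(f\left(\frac{\beta^2}{\alpha+k}\right)+k\right)f\left(\frac{\alpha}{\beta}\right)+k f\left(\frac{\beta^2}{\alpha+k}\right)f\left(\frac{1}{\beta}\right)$. Then $\mathcal{L}$ and $\varphi(\mathcal{L})$ are disjoint.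
   Context: Points of $\mathrm{PG}(2,q^h)$ are written in homogeneous coordinates $(a:b:c)$. *)

From HB Require Import structures.
From mathcomp Require Import all_boot all_order all_algebra all_field.
Set Implicit Arguments. Unset Strict Implicit. Unset Printing Implicit Defensive.
Import GRing.Theory.
Local Open Scope ring_scope.

(* Two coordinate triples represent the same point of PG(2, L)
   (both assumed nonzero): they are proportional by a nonzero scalar. *)
Definition same_point (L : fieldType) (P Q : L * L * L) : Prop :=
  exists c : L, c != 0 /\
    [/\ P.1.1 = c * Q.1.1, P.1.2 = c * Q.1.2 & P.2 = c * Q.2].

Definition phi (L : Type) (P : L * L * L) : L * L * L :=
  (P.2, P.1.1, P.1.2).

Definition Lpt (F : fieldType) (L : fieldExtType F) (f : L -> F^o)
  (alpha beta : L) (x : L) (y : F) : L * L * L :=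
  (x, (f x)%:A + y *: alpha, y *: beta).

Definition inLset (F : fieldType) (L : fieldExtType F) (f : L -> F^o)
  (alpha beta : L) (P : L * L * L) : Prop :=
  exists (x : L) (y : F), (x != 0 \/ y != 0) /\ same_point P (Lpt f alpha beta x y).

From HB Require Import structures.
From mathcomp Require Import all_boot all_order all_algebra all_field.
From mathcomp Require Import ring.
Import GRing.Theory.
Local Open Scope ring_scope.

(* A common point would make (x : f(x) + y alpha : y beta) proportional to
   (y' beta : x' : f(x') + y' alpha).  If y' = 0, the last two coordinates
   force x' = f(x') alpha / beta with f(x') <> 0, hence f(alpha / beta) = 1.
   Otherwise put k = f(x') / y', so that f(x') + y' alpha = y' (alpha + k),
   which is nonzero as alpha is not in F_q.  This fixes the proportionality
   factor, whence x = y beta^2 / (alpha + k) and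
   x' = y' (alpha + k) (alpha + f(beta^2 / (alpha + k))) / beta; applying f
   to the latter, f(x') = y' k is exactly the identity excluded by (2). *)

Lemma same_point_sym {L : fieldType} {P Q : L * L * L} :
  same_point P Q -> same_point Q P.
Proof.
move=> [c [c0 [P1 P2 P3]]]; exists c^-1.
by rewrite invr_eq0 c0; split=> //; split; rewrite ?P1 ?P2 ?P3 mulKf.
Qed.

Lemma same_point_trans {L : fieldType} {P Q R : L * L * L} :
  same_point P Q -> same_point Q R -> same_point P R.
Proof.
move=> [c [c0 [P1 P2 P3]]] [d [d0 [Q1 Q2 Q3]]]; exists (c * d).
by rewrite mulf_neq0 //; split=> //; split; rewrite -mulrA -?Q1 -?Q2 -?Q3.
Qed.

Lemma same_point_phi {L : fieldType} {P Q : L * L * L} :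
  same_point P Q -> same_point (phi P) (phi Q).
Proof. by move=> [c [c0 [P1 P2 P3]]]; exists c. Qed.

Lemma algM (R : pzRingType) (A : lalgType R) (a b : R) :
  (a * b)%:A = a%:A * b%:A :> A.
Proof. by rewrite mulr_algl scalerA. Qed.

Lemma addr_alg_neq0 (F : fieldType) (L : fieldExtType F) (a : L) (k : F) :
  a \notin 1%VS -> a + k%:A != 0.
Proof.
by apply: contra; rewrite addr_eq0 => /eqP ->; rewrite rpredN rpredZ ?mem1v.
Qed.

Section CommonPointOfLAndPhiL.

Context {F : fieldType} {L : fieldExtType F} {f : {linear L -> F^o}}.
Context {alpha beta : L}.
Hypothesis beta_neq0 : beta != 0.

Local Notation Lpt := (Lpt f alpha beta).

Lemma linear_quadratic_expand (k b : F) :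
  f ((alpha + k%:A) * (alpha + b%:A) / beta)
  = f (alpha ^+ 2 / beta) + (b + k) * f (alpha / beta) + k * b * f beta^-1.
Proof.
have -> : (alpha + k%:A) * (alpha + b%:A) / beta
          = alpha ^+ 2 / beta + (b + k)%:A * (alpha / beta)
            + (k * b)%:A * beta^-1.
  by rewrite scalerDl algM; ring.
by rewrite !linearD /= !mulr_algl !linearZ.
Qed.

Lemma meet_Lpt_phi_y'0 {x x' : L} {y : F} :
  x != 0 \/ y != 0 -> same_point (Lpt x y) (phi (Lpt x' 0)) ->
  f (alpha / beta) = 1.
Proof.
move=> nz [e [e0 [/= ex ey ez]]].
rewrite scale0r mulr0 in ex; subst x.
have yn0 : y != 0 by case: nz; rewrite ?eqxx.
rewrite linear0 scale0r add0r in ey; rewrite scale0r addr0 in ez.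
have fx'n0 : f x' != 0.
  apply: contraNneq yn0 => fx'0; move/eqP: ez.
  by rewrite fx'0 scale0r mulr0 scaler_eq0 (negbTE beta_neq0) orbF.
have ex' : x' = (f x')%:A * (alpha / beta).
  by apply: (mulfI e0); rewrite -ey mulrA -ez -scalerAl mulrC divfK.
move/(congr1 f): ex'; rewrite mulr_algl linearZ /= -{1}[f x']mulr1.
by move/(mulfI fx'n0).
Qed.

Lemma meet_Lpt_phi_y'_neq0 {x x' : L} {y y' : F} :
  alpha \notin 1%VS -> y' != 0 ->
  same_point (Lpt x y) (phi (Lpt x' y')) ->
  exists k : F,
    k = f (alpha ^+ 2 / beta)
        + (f (beta ^+ 2 / (alpha + k%:A)) + k) * f (alpha / beta)
        + k * f (beta ^+ 2 / (alpha + k%:A)) * f (beta^-1).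
Proof.
move=> alpha_notin y'n0 [e [e0 [/= ex ey ez]]].
rewrite -(mulr_algl y' beta) in ex; rewrite -(mulr_algl y alpha) in ey.
rewrite -(mulr_algl y beta) -(mulr_algl y' alpha) in ez.
have y'A : y'%:A != 0 :> L by rewrite scaler_eq0 oner_eq0 orbF.
set k := f x' / y'.
have fx' : f x' = y' * k by rewrite /k mulrC divfK.
set a := alpha + k%:A; have a0 : a != 0 by apply: addr_alg_neq0.
set b := f (beta ^+ 2 / a).
have ee : e = y%:A * beta / (y'%:A * a).
  have -> : y%:A * beta = e * (y'%:A * a) by rewrite ez fx' algM /a; ring.
  by rewrite mulfK // mulf_neq0.
have fx : f x = y * b.
  have -> : x = y%:A * (beta ^+ 2 / a).
    by rewrite ex ee; field; rewrite a0 y'A.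
  by rewrite mulr_algl linearZ.
have ex' : x' = y'%:A * (a * (alpha + b%:A) / beta).
  apply: (mulfI e0); rewrite -ey fx algM ee; field.
  by rewrite beta_neq0 a0 y'A.
have fk : k = f (a * (alpha + b%:A) / beta).
  by apply: (mulfI y'n0); rewrite -fx' {1}ex' mulr_algl linearZ.
by exists k; rewrite {1}fk linear_quadratic_expand.
Qed.

End CommonPointOfLAndPhiL.

Theorem theorem4p1 (F : finFieldType) (L : fieldExtType F) (h : nat)
  (hdim : \dim {:L} = h) (h2 : (2 <= h)%N)
  (f : {linear L -> F^o}) (fnz : exists x : L, f x != 0)
  (alpha beta : L) (halpha : alpha \notin 1%VS) (hbeta : beta != 0)
  (H1 : f (alpha / beta) != 1)
  (H2 : forall k : F,
     k != f (alpha ^+ 2 / beta)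
          + (f (beta ^+ 2 / (alpha + k%:A)) + k) * f (alpha / beta)
          + k * f (beta ^+ 2 / (alpha + k%:A)) * f (beta^-1)) :
  forall P : L * L * L,
    inLset f alpha beta P ->
    ~ (exists Q : L * L * L, inLset f alpha beta Q /\ P = phi Q).
Proof.
move=> P [x [y [nz Pxy]]] [Q [[x' [y' [_ Qxy']]] PQ]].
have meet : same_point (Lpt f alpha beta x y) (phi (Lpt f alpha beta x' y')).
  apply: (same_point_trans (same_point_sym Pxy)).
  by rewrite PQ; apply: same_point_phi.
have [y'0 | y'n0] := eqVneq y' 0.
  by move: meet; rewrite y'0 => /(meet_Lpt_phi_y'0 hbeta nz); apply/eqP.
have [k /eqP] := meet_Lpt_phi_y'_neq0 hbeta halpha y'n0 meet.
exact/negP/H2.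
Qed.
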